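(* Let $n\ge1$, $0<\tau_0\le\infty$, $\sigma\in J_n^+$, $\Lambda$ a continuous positive function, and let $V\ge0$ be continuous with $V(x,t)\ge\Lambda(t)|x|^\sigma$ for $|x|\ge1$, $0<t<\tau_0$. Then there are a non-increasing function $\eta:\mathbb{R}\to(0,\infty)$ and, for each $d\ge0$, a constant $\varepsilon_0>0$ such that: (i) for every $P\ge0$, $\mathcal{B}\big(V e^{-P|\cdot|}\big)(x,t)\ge\eta(P)\Lambda(t)e^{-P|x|}$ on $Q_{\tau_0}$; (ii) for every $d\ge0$, $\mathcal{B}\big(V|\cdot|^d\big)(x,t)\ge\varepsilon_0\Lambda(t)|x|^{\sigma+d}$ on $Q_{\tau_0}$; moreover, for $d$ ranging in a bounded subset of $[0,\infty)$, $\varepsilon_0$ can be chosen independent of $d$.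
   Context: $J_n^+=\{0\}\cup[1,\infty)$ if $n=1$, $[0,\infty)$ if $n\ge2$. $\mathcal{B}$ acts in the $x$-variable: $\mathcal{B}\varphi=B*\varphi$ with $B=\mathcal{F}^{-1}((1+|\xi|^2)^{-1})$. $Q_{\tau_0}=\mathbb{R}^n\times[0,\tau_0)$. *)

From HB Require Import structures.
From mathcomp Require Import all_boot all_order all_algebra.
From mathcomp Require Import all_classical all_reals all_analysis.
Set Implicit Arguments. Unset Strict Implicit. Unset Printing Implicit Defensive.
Import Order.TTheory GRing.Theory Num.Theory.
Import numFieldNormedType.Exports.
Local Open Scope classical_set_scope.
Local Open Scope ring_scope.

Section Defs.
Variable R : realType.

Definition enorm n (x : 'rV[R]_n) : R := Num.sqrt (\sum_(i < n) x ord0 i ^+ 2).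

(* Lebesgue integral over R^n of an extended-real valued function,
   written as the iterated one-dimensional Lebesgue integral
   (for the nonnegative measurable integrands used here this is the
   Lebesgue integral w.r.t. n-dimensional Lebesgue measure, by Tonelli). *)
Fixpoint int_Rn (n : nat) : ('rV[R]_n -> \bar R) -> \bar R :=
  match n with
  | 0 => fun f => f 0
  | n'.+1 => fun f =>
      (\int[@lebesgue_measure R]_(a in [set: R])
         int_Rn (fun y : 'rV[R]_n' => f (row_mx (const_mx a : 'rV[R]_1) y)))%E
  end.

(* The Bessel kernel B = F^{-1}((1+|xi|^2)^{-1}), i.e. the kernel of
   (I - Laplacian)^{-1} on R^n, given by its standard subordination formula
   B(x) = int_0^oo (4 pi s)^{-n/2} e^{-s} e^{-|x|^2/(4s)} ds  (value +oo allowed). *)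
Definition bessel_kernel (n : nat) (x : 'rV[R]_n) : \bar R :=
  (\int[@lebesgue_measure R]_(s in [set s : R | (0 < s)%R])
     ((expR (- s - enorm x ^+ 2 / (4 * s)) / (Num.sqrt (4 * pi * s)) ^+ n)%R)%:E)%E.

Definition bessel_op (n : nat) (phi : 'rV[R]_n -> R) (x : 'rV[R]_n) : \bar R :=
  int_Rn (fun y => (bessel_kernel y * (phi (x - y))%:E)%E).

Definition Jn_plus (n : nat) (sigma : R) : Prop :=
  if n == 1%N then sigma = 0 \/ 1 <= sigma else 0 <= sigma.

Definition Qtau (n : nat) (tau0 : \bar R) : set ('rV[R]_n * R) :=
  [set p | 0 <= p.2 /\ (p.2%:E < tau0)%E].

End Defs.

(* The Bessel kernel is bounded below by a positive constant on the cube
   [-2, 2]^n: restrict its subordination integral to s in [1, 2].  For every x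
   this cube contains a unit box of points y with |x - y| >= 1, on which
   V (x - y) >= Lambda |x - y|^sigma, while |x - y| and |x| differ by at most an
   additive constant and, as |x - y| >= 1, by at most a multiplicative one.
   Integrating over that box alone yields both weighted lower bounds, with
   constants depending only on n, P and sigma + M.  At t = 0 the growth
   hypothesis on V is recovered by continuity in t. *)

From HB Require Import structures.
From mathcomp Require Import all_boot all_order all_algebra.
From mathcomp Require Import all_classical all_reals all_analysis.
From mathcomp Require Import ring lra.
Import Order.TTheory GRing.Theory Num.Theory.
Import numFieldNormedType.Exports.
Local Open Scope classical_set_scope.
Local Open Scope ring_scope.
Set Implicit Arguments. Unset Strict Implicit. Unset Printing Implicit Defensive.

Section Enorm.
Variable R : realType.

Lemma enorm_ge0 n (x : 'rV[R]_n) : 0 <= enorm x.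
Proof. exact: sqrtr_ge0. Qed.

Lemma enorm_sqr n (x : 'rV[R]_n) : enorm x ^+ 2 = \sum_(i < n) x ord0 i ^+ 2.
Proof. by rewrite sqr_sqrtr // sumr_ge0 // => i _; exact: sqr_ge0. Qed.

Lemma enorm0 n : enorm (0 : 'rV[R]_n) = 0.
Proof. by rewrite /enorm big1 ?sqrtr0 // => i _; rewrite mxE expr0n. Qed.

Lemma le_coord_enorm n (x : 'rV[R]_n) i : `|x ord0 i| <= enorm x.
Proof.
rewrite -(ler_pXn2r (n := 2)) ?nnegrE ?enorm_ge0 // real_normK ?num_real //.
by rewrite enorm_sqr (bigD1 i) //= lerDl sumr_ge0 // => j _; exact: sqr_ge0.
Qed.

(* A weak triangle inequality, avoiding Cauchy-Schwarz: the cross terms are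
   bounded coordinatewise by |x_i| <= |x|. *)
Lemma enormD_le n (x y : 'rV[R]_n) (b : R) :
  0 <= b -> (forall i, `|y ord0 i| <= b) -> enorm (x + y) <= enorm x + n%:R * b.
Proof.
move=> b0 yb; have x0 := enorm_ge0 x.
rewrite -(ler_pXn2r (n := 2)) ?nnegrE ?addr_ge0 ?mulr_ge0 ?enorm_ge0 //.
apply: (@le_trans _ _ (\sum_(i < n) (x ord0 i ^+ 2 + (2 * enorm x * b + b ^+ 2)))).
  rewrite enorm_sqr; apply: ler_sum => i _; rewrite mxE.
  have xi := le_coord_enorm x i; have yi := yb i.
  have xy : `|x ord0 i * y ord0 i| <= enorm x * b.
    by rewrite normrM ler_pM ?normr_ge0.
  have := ler_norm (x ord0 i * y ord0 i).
  have : y ord0 i ^+ 2 <= b ^+ 2.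
    by rewrite -real_normK ?num_real // ler_pXn2r ?nnegrE ?normr_ge0.
  rewrite !expr2; lra.
have nn : n%:R <= n%:R ^+ 2 :> R.
  by rewrite -natrX ler_nat; case: (n) => // m; rewrite -{1}(expn1 m.+1) leq_pexp2l.
rewrite big_split /= -enorm_sqr sumr_const card_ord -mulr_natl.
have := ler_wpM2r (sqr_ge0 b) nn; have := mulr_ge0 (ler0n _ n) (mulr_ge0 x0 b0).
rewrite !expr2; nra.
Qed.
End Enorm.

Section Integrals.
Variable R : realType.
Local Notation mu := (@lebesgue_measure R).

Lemma ge0_le_integral_nonmeasurable d (T : measurableType d)
    (m : {measure set T -> \bar R}) (D : set T) (f g : T -> \bar R) :
  (forall x, D x -> (0 <= f x)%E) -> (forall x, D x -> (f x <= g x)%E) ->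
  (\int[m]_(x in D) f x <= \int[m]_(x in D) g x)%E.
Proof.
move=> f0 fg.
have g0 x : D x -> (0 <= g x)%E by move=> Dx; exact: le_trans (f0 _ Dx) (fg _ Dx).
rewrite (ge0_integralE m f0) (ge0_integralE m g0).
apply: ereal_sup_le => _ [h hf <-]; exists h => //= x.
apply: le_trans (hf x) _; rewrite /patch; case: ifP => // /set_mem; exact: fg.
Qed.

Lemma integral_ge_unit_itv (D : set R) (g : R -> \bar R) (a c : R) :
  0 <= c -> `[a, a + 1]%classic `<=` D ->
  (forall x, D x -> (0 <= g x)%E) -> (forall x, a <= x <= a + 1 -> (c%:E <= g x)%E) ->
  (c%:E <= \int[mu]_(x in D) g x)%E.
Proof.
move=> c0 AD g0 gc; set A := `[a, a + 1]%classic.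
have AD_le : (\int[mu]_(x in A) g x <= \int[mu]_(x in D) g x)%E.
  rewrite [leLHS]integral_mkcond [leRHS]integral_mkcond.
  apply: ge0_le_integral_nonmeasurable => x _; rewrite /patch.
    by case: ifP => // /set_mem /AD /g0.
  case: ifP => [/set_mem Ax|_]; last by case: ifP => // /set_mem /g0.
  by rewrite ifT //; apply/mem_set/AD.
apply: le_trans AD_le; apply: le_trans (_ : (\int[mu]_(x in A) c%:E <= _)%E).
  rewrite integral_cst /=; last exact: measurable_itv.
  rewrite lebesgue_measure_itv /= lte_fin ltrDl ltr01.
  by rewrite -EFinB addrAC subrr add0r mule1.
apply: ge0_le_integral_nonmeasurable => x; rewrite /A /= in_itv /= => /andP[xa xa1] //.
by apply: gc; rewrite xa xa1.
Qed.

Lemma int_Rn_ge0 n (f : 'rV[R]_n -> \bar R) :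
  (forall y, (0 <= f y)%E) -> (0 <= int_Rn f)%E.
Proof.
elim: n f => [|n IH] f f0 /=; first exact: f0.
by apply: integral_ge0 => a _; apply: IH.
Qed.

Lemma int_Rn_ge_unit_box n (lo : nat -> R) (c : R) (f : 'rV[R]_n -> \bar R) :
  0 <= c -> (forall y, (0 <= f y)%E) ->
  (forall y : 'rV[R]_n, (forall i : 'I_n, lo i <= y ord0 i <= lo i + 1) ->
     (c%:E <= f y)%E) ->
  (c%:E <= int_Rn f)%E.
Proof.
elim: n lo f => [|n IH] lo f c0 f0 fc /=; first by apply: fc => -[].
apply: (@integral_ge_unit_itv _ _ (lo 0%N)) => // [a _|a ha].
  by apply: int_Rn_ge0.
apply: (IH (fun k => lo k.+1)) => // y hy; apply: fc => i.
case: (@splitP 1 n i) => [j eij|k eik].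
- have -> : i = lshift n j by apply: val_inj.
  by rewrite (row_mxEl (const_mx a : 'rV[R]_1)) mxE; case: j {eij} => -[|//].
- have -> : i = rshift 1 k by apply: val_inj.
  by rewrite (row_mxEr (const_mx a : 'rV[R]_1)); apply: hy.
Qed.

End Integrals.

Section BesselLowerBound.
Variable R : realType.

Lemma bessel_kernel_ge0 n (y : 'rV[R]_n) : (0 <= bessel_kernel y)%E.
Proof.
apply: integral_ge0 => s _; rewrite lee_fin.
by rewrite divr_ge0 ?expR_ge0 ?exprn_ge0 ?sqrtr_ge0.
Qed.

Lemma bessel_kernel_ge n (y : 'rV[R]_n) (r : R) : enorm y <= r ->
  ((expR (-2 - r ^+ 2 / 4) / Num.sqrt (8 * pi) ^+ n)%:E <= bessel_kernel y)%E.
Proof.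
move=> yr; have y0 := enorm_ge0 y; have pi0 := pi_gt0 R.
have yr2 : enorm y ^+ 2 <= r ^+ 2 by rewrite ler_pXn2r ?nnegrE //; exact: le_trans yr.
apply: (@integral_ge_unit_itv _ _ _ 1).
- by rewrite divr_ge0 ?expR_ge0 ?exprn_ge0 ?sqrtr_ge0.
- by move=> s /=; rewrite in_itv /= => /andP[s1 _]; exact: lt_le_trans ltr01 s1.
- by move=> s _; rewrite lee_fin divr_ge0 ?expR_ge0 ?exprn_ge0 ?sqrtr_ge0.
move=> s /andP[s1 s2]; rewrite lee_fin; have s0 : 0 < s by lra.
apply: ler_pM; rewrite ?expR_ge0 ?invr_ge0 ?exprn_ge0 ?sqrtr_ge0 //.
  rewrite ler_expR; suff : enorm y ^+ 2 / (4 * s) <= r ^+ 2 / 4 by lra.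
  rewrite ler_pdivrMr ?mulr_gt0 // (_ : r ^+ 2 / 4 * (4 * s) = r ^+ 2 * s); last by field.
  by have := sqr_ge0 r; nra.
rewrite lef_pV2 ?posrE ?exprn_gt0 ?sqrtr_gt0 ?mulr_gt0 //.
by rewrite lerXn2r ?nnegrE ?sqrtr_ge0 // ler_wsqrtr //; nra.
Qed.

(* The lower corner of a unit box of points [y] with [|y_i| <= 2] and
   [|x_0 - y_0| >= 1]: the first side is [-2, -1] or [1, 2] according to the
   sign of [x_0], all other sides are [0, 1]. *)
Definition unit_box_corner n (x : 'rV[R]_n.+1) (k : nat) : R :=
  if k is 0 then (if 0 <= x ord0 ord0 then -2 else 1) else 0.

Lemma unit_box_cornerP n (x y : 'rV[R]_n.+1) :
  (forall i : 'I_n.+1, unit_box_corner x i <= y ord0 i <= unit_box_corner x i + 1) ->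
  (forall i, `|y ord0 i| <= 2) /\ 1 <= enorm (x - y).
Proof.
move=> hy; split=> [i|].
  rewrite ler_norml; move: (hy i); rewrite /unit_box_corner.
  by case: (nat_of_ord i) => [|k]; [case: ifP => _|] => /andP[? ?]; apply/andP; split; lra.
apply: le_trans (le_coord_enorm _ ord0); rewrite !mxE.
move: (hy ord0); rewrite /unit_box_corner /=; case: ifP => x0 /andP[? ?].
  by rewrite ger0_norm; lra.
by move/negbT: x0; rewrite -ltNge => x0; rewrite ltr0_norm; lra.
Qed.

Lemma bessel_op_ge n : exists2 k : R, 0 < k &
  forall (phi : 'rV[R]_n.+1 -> R) (x : 'rV[R]_n.+1) (c : R),
    0 <= c -> (forall z, 0 <= phi z) ->
    (forall y : 'rV[R]_n.+1, (forall i, `|y ord0 i| <= 2) -> 1 <= enorm (x - y) ->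
       c <= phi (x - y)) ->
    ((k * c)%:E <= bessel_op phi x)%E.
Proof.
set r := n.+1%:R * 2 : R.
exists (expR (-2 - r ^+ 2 / 4) / Num.sqrt (8 * pi) ^+ n.+1).
  by rewrite divr_gt0 ?expR_gt0 ?exprn_gt0 ?sqrtr_gt0 ?mulr_gt0 ?pi_gt0.
move=> phi x c c0 phi0 phic; rewrite /bessel_op.
apply: (int_Rn_ge_unit_box (lo := unit_box_corner x)).
- by rewrite mulr_ge0 ?divr_ge0 ?expR_ge0 ?exprn_ge0 ?sqrtr_ge0.
- by move=> y; rewrite mule_ge0 ?bessel_kernel_ge0 ?lee_fin.
move=> y /unit_box_cornerP[yb xy1]; rewrite EFinM.
apply: lee_pmul; rewrite ?lee_fin ?divr_ge0 ?expR_ge0 ?exprn_ge0 ?sqrtr_ge0 ?phic //.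
apply: bessel_kernel_ge.
by have := enormD_le 0 (ler0n _ 2) yb; rewrite add0r enorm0 add0r.
Qed.

End BesselLowerBound.

Section WeightedBounds.
Variables (R : realType) (n : nat) (sigma lam : R) (v : 'rV[R]_n -> R).
Hypotheses (sigma_ge0 : 0 <= sigma) (lam_gt0 : 0 < lam)
  (v_ge : forall z, 1 <= enorm z -> lam * enorm z `^ sigma <= v z).
Variables (x y : 'rV[R]_n).
Hypotheses (y_le2 : forall i, `|y ord0 i| <= 2) (xy_ge1 : 1 <= enorm (x - y)).

Lemma exp_weight_ge P : 0 <= P ->
  expR (- P * (n%:R * 2)) * (lam * expR (- P * enorm x)) <=
  v (x - y) * expR (- P * enorm (x - y)).
Proof.
move=> P0.
have xy_le : enorm (x - y) <= enorm x + n%:R * 2.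
  by apply: enormD_le => // i; rewrite mxE normrN.
have exp_le : expR (- P * (n%:R * 2)) * expR (- P * enorm x) <= expR (- P * enorm (x - y)).
  by rewrite -expRD ler_expR; have := ler_wpM2l P0 xy_le; lra.
have pow_ge1 : 1 <= enorm (x - y) `^ sigma.
  by have := ler_powR xy_ge1 sigma_ge0; rewrite powRr0.
rewrite mulrCA.
apply: le_trans (_ : lam * enorm (x - y) `^ sigma * expR (- P * enorm (x - y)) <= _).
  by rewrite -mulrA ler_pM2l //; apply: le_trans exp_le _; rewrite ler_peMl ?expR_ge0.
by rewrite ler_wpM2r ?expR_ge0 ?v_ge.
Qed.

Lemma power_weight_ge d M : 0 <= d -> d <= M ->
  ((1 + n%:R * 2) `^ (sigma + M))^-1 * (lam * enorm x `^ (sigma + d)) <=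
  v (x - y) * enorm (x - y) `^ d.
Proof.
move=> d0 dM; set C := 1 + n%:R * 2.
have C1 : 1 <= C by rewrite lerDl mulr_ge0.
have xy0 : 0 < enorm (x - y) by exact: lt_le_trans ltr01 xy_ge1.
have x_le : enorm x <= C * enorm (x - y).
  have := enormD_le (x - y) (ler0n _ 2) y_le2; rewrite subrK.
  by have := ler_wpM2l (mulr_ge0 (ler0n _ n) (ler0n _ 2)) xy_ge1; rewrite /C; lra.
have pow_le : enorm x `^ (sigma + d) <= C `^ (sigma + M) * enorm (x - y) `^ (sigma + d).
  apply: le_trans (_ : (C * enorm (x - y)) `^ (sigma + d) <= _).
    by rewrite ge0_ler_powR ?nnegrE ?enorm_ge0 ?addr_ge0 ?mulr_ge0 ?enorm_ge0 //; lra.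
  by rewrite powRM ?enorm_ge0 ?ler_wpM2r ?powR_ge0 ?ler_powR ?lerD2l //; lra.
rewrite mulrCA; apply: le_trans (_ : lam * enorm (x - y) `^ (sigma + d) <= _).
  by rewrite ler_pM2l // mulrC ler_pdivrMr ?powR_gt0 1?mulrC //; lra.
rewrite powRD; last by apply/implyP => _; rewrite gt_eqF.
by rewrite mulrA ler_wpM2r ?powR_ge0 ?v_ge.
Qed.

End WeightedBounds.

Lemma within_continuous_comp_maps {U V W : topologicalType} (A : set U) (B : set V)
    (f : U -> V) (g : V -> W) :
  continuous f -> (forall u, A u -> B (f u)) -> {within B, continuous g} ->
  {within A, continuous (g \o f)}.
Proof.
move=> cf fAB /subspace_continuousP cg; apply/subspace_continuousP => u Au.
have fAB' : f @ within A (nbhs u) --> within B (nbhs (f u)).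
  move=> P; rewrite !nbhs_simpl /= => BP.
  exact: filterS (fun v BPv Av => BPv (fAB v Av)) (cf u _ BP).
exact: cvg_trans (cvg_app g fAB') (cg _ (fAB _ Au)).
Qed.

Lemma le_at_left_endpoint {R : realType} (T : set R) (f g : R -> R) (a r : R) :
  T a -> a < r -> (forall t, a < t < r -> T t) ->
  {within T, continuous f} -> {within T, continuous g} ->
  (forall t, a < t < r -> f t <= g t) -> f a <= g a.
Proof.
move=> Ta ar aT /subspace_continuousP cf /subspace_continuousP cg fg.
have rightT : a^'+ `=>` within T (nbhs a).
  move=> P TP.
  have TP' : \forall t \near a^'+, T t -> P t by exact: cvg_within.
  near=> t; apply: (near TP' t) => //; apply: aT.
  by apply/andP; split; near: t; [exact: nbhs_right_gt | exact: nbhs_right_lt].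
apply: (ler_cvg_to (cvg_trans (cvg_app f rightT) (cf _ Ta))
                   (cvg_trans (cvg_app g rightT) (cg _ Ta))).
near=> t; apply: fg; apply/andP; split; near: t;
  [exact: nbhs_right_gt | exact: nbhs_right_lt].
Unshelve. all: by end_near.
Qed.

Lemma lower_bound_at_time0 (R : realType) n (tau0 : \bar R) (Lambda : R -> R)
    (V : 'rV[R]_n -> R -> R) (z : 'rV[R]_n) (w : R) :
  (0 < tau0)%E ->
  {within [set t : R | 0 <= t /\ (t%:E < tau0)%E], continuous Lambda} ->
  {within Qtau tau0, continuous (fun p : 'rV[R]_n * R => V p.1 p.2)} ->
  (forall t, 0 < t -> (t%:E < tau0)%E -> Lambda t * w <= V z t) ->
  forall t, 0 <= t -> (t%:E < tau0)%E -> Lambda t * w <= V z t.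
Proof.
move=> tau0_gt0 cL cV Vge t; rewrite le0r => /orP[/eqP-> _|]; last exact: Vge.
have [r r0 r_le] : exists2 r : R, 0 < r & (r%:E <= tau0)%E.
  case: tau0 tau0_gt0 {cL cV Vge} => [r|_|//]; last by exists 1; rewrite ?leey.
  by rewrite lte_fin => r0; exists r.
have in_time s : 0 < s < r -> 0 <= s /\ (s%:E < tau0)%E.
  by move=> /andP[s0 sr]; split; [exact: ltW | apply: lt_le_trans r_le; rewrite lte_fin].
set T := [set t : R | 0 <= t /\ (t%:E < tau0)%E].
apply: (le_at_left_endpoint (T := T) (f := fun t => Lambda t * w) (g := V z) (r := r))
  => // [||s /[dup] /andP[s0 _] /in_time[_]].
- by move=> s; exact: (cvgM (cL s) (cvg_cst w)).
- have cz : continuous (fun s : R => (z, s)).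
    by move=> s; apply: (@cvg_pair _ _ _ _ (nbhs z) (nbhs s) _ _ _ (fun=> z) id);
      [exact: cvg_cst | exact: cvg_id].
  exact: (within_continuous_comp_maps (A := T) cz (fun s ts => ts) cV).
- exact: Vge.
Qed.

Lemma Jn_plus_ge0 (R : realType) n (sigma : R) : Jn_plus n sigma -> 0 <= sigma.
Proof. by rewrite /Jn_plus; case: ifP => _ // [->|]; lra. Qed.

Theorem mainTheorem14 (R : realType) (n : nat) (tau0 : \bar R) (sigma : R)
  (Lambda : R -> R) (V : 'rV[R]_n -> R -> R) :
  (1 <= n)%N ->
  (0 < tau0)%E ->
  Jn_plus n sigma ->
  {within [set t : R | 0 <= t /\ (t%:E < tau0)%E], continuous Lambda} ->
  (forall t : R, 0 <= t -> (t%:E < tau0)%E -> 0 < Lambda t) ->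
  {within (@Qtau R n tau0), continuous (fun p : 'rV[R]_n * R => V p.1 p.2)} ->
  (forall x t, (@Qtau R n tau0) (x, t) -> 0 <= V x t) ->
  (forall x t, 1 <= enorm x -> 0 < t -> (t%:E < tau0)%E ->
      Lambda t * enorm x `^ sigma <= V x t) ->
  exists eta : R -> R,
    (forall P, 0 < eta P) /\
    {homo eta : P Q / P <= Q >-> Q <= P} /\
    (forall P : R, 0 <= P -> forall x t, (@Qtau R n tau0) (x, t) ->
       ((eta P * Lambda t * expR (- P * enorm x))%:E <=
        bessel_op (fun y => (V y t * expR (- P * enorm y))%R) x)%E) /\
    (forall M : R, 0 <= M -> exists eps0 : R, 0 < eps0 /\
       forall d : R, 0 <= d -> d <= M -> forall x t, (@Qtau R n tau0) (x, t) ->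
         ((eps0 * Lambda t * enorm x `^ (sigma + d))%:E <=
          bessel_op (fun y => (V y t * enorm y `^ d)%R) x)%E).
Proof.
case: n V => [//|n] V _ tau0_gt0 /Jn_plus_ge0 sigma0 cL Lambda_gt0 cV V_ge0 V_ge.
have V_geQ z t : Qtau tau0 (z, t) -> 1 <= enorm z -> Lambda t * enorm z `^ sigma <= V z t.
  move=> [t0 t_lt] z1; apply: (lower_bound_at_time0 tau0_gt0 cL cV) => // s s0 s_lt.
  exact: V_ge.
have [k k0 bessel_ge] := bessel_op_ge R n.
exists (fun P => k * expR (- P * (n.+1%:R * 2))); split; [|split; [|split]].
- by move=> P; rewrite mulr_gt0 ?expR_gt0.
- move=> P Q PQ; rewrite ler_pM2l // ler_expR !mulNr lerN2.
  by rewrite ler_wpM2r ?mulr_ge0.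
- move=> P P0 x t Qxt; have Lt := Lambda_gt0 t Qxt.1 Qxt.2.
  rewrite -!mulrA; apply: bessel_ge => [|z|y y_le2 xy_ge1].
  + by rewrite !mulr_ge0 ?expR_ge0 ?ltW.
  + by rewrite mulr_ge0 ?expR_ge0 ?V_ge0.
  + exact: (exp_weight_ge sigma0 Lt (fun z => V_geQ z t Qxt)).
- move=> M M0; set C := (1 + n.+1%:R * 2) `^ (sigma + M).
  have C0 : 0 < C by rewrite powR_gt0 // ltr_wpDr ?mulr_ge0.
  exists (k / C); split=> [|d d0 dM x t Qxt]; first by rewrite divr_gt0.
  have Lt := Lambda_gt0 t Qxt.1 Qxt.2.
  rewrite -!mulrA; apply: bessel_ge => [|z|y y_le2 xy_ge1].
  + by rewrite !mulr_ge0 ?powR_ge0 ?invr_ge0 ?ltW.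
  + by rewrite mulr_ge0 ?powR_ge0 ?V_ge0.
  + exact: (power_weight_ge sigma0 Lt (fun z => V_geQ z t Qxt)).
Qed.
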